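(* Assume (F) and (H), and let $\varepsilon>0$. If $c\ge \max_{v\in[0,1]}f(v)-\min_{v\in[0,1]}h'(v)+2\sqrt{\varepsilon\sup_{v\in(0,1]}\frac{f(v)}{v}}$, then the problem $y'=(c+h'(v))\frac{\sqrt{y(2\varepsilon+y)}}{\varepsilon+y}-f(v)$ on $[0,1]$, $y(0)=0$, $y(1)=0$, $y>0$ on $(0,1)$, has a solution, i.e., $c$ is an admissible speed.
   Context: Assumptions. - (F): $f\in C([0,1])$, $f(0)=f(1)=0$, $f(s)>0$ for $s\in(0,1)$, and there is $k>0$ with $f(s)\le ks$ and $f(s)\le k(1-s)$ for all $s\in[0,1]$. - (H): $h\in C^2([0,1])$ with $h(0)=h'(0)=0$. *)

From Stdlib Require Import Reals.
From Coquelicot Require Import Coquelicot.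
Open Scope R_scope.

Definition I01 (x : R) : Prop := 0 <= x <= 1.

Definition cont_on01_at (g : R -> R) (x : R) : Prop :=
  filterlim g (within I01 (locally x)) (locally (g x)).

Definition cont_on01 (g : R -> R) : Prop := forall x, I01 x -> cont_on01_at g x.

Definition deriv01_at (g : R -> R) (x dgx : R) : Prop :=
  filterlim (fun t => (g t - g x) / (t - x))
    (within (fun t => I01 t /\ t <> x) (locally x)) (locally dgx).

Definition hypF (f : R -> R) : Prop :=
  cont_on01 f /\ f 0 = 0 /\ f 1 = 0 /\
  (forall s, 0 < s < 1 -> f s > 0) /\
  exists k, k > 0 /\ forall s, I01 s -> f s <= k * s /\ f s <= k * (1 - s).

Definition hypH (h h1 h2 : R -> R) : Prop :=
  (forall x, I01 x -> deriv01_at h x (h1 x)) /\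
  (forall x, I01 x -> deriv01_at h1 x (h2 x)) /\
  cont_on01 h2 /\ h 0 = 0 /\ h1 0 = 0.

Definition solves (f h1 : R -> R) (eps c : R) (y : R -> R) : Prop :=
  cont_on01 y /\ y 0 = 0 /\ y 1 = 0 /\
  forall v, 0 < v < 1 ->
    y v > 0 /\
    is_derive y v ((c + h1 v) * sqrt (y v * (2 * eps + y v)) / (eps + y v) - f v).

From Stdlib Require Import Reals Lra Lia ZArith.
From Coquelicot Require Import Coquelicot.
Open Scope R_scope.

(* In the reversed variable t = 1 - v the problem becomes Y' = Phi(t, Y),
   Y(0) = 0, with Phi(t, Y) = f(1-t) - (c + h'(1-t)) g(Y) and
   g(Y) = sqrt(Y (2 eps + Y)) / (eps + Y).  Since c + h' >= 0 and g is
   nondecreasing, Phi is nonincreasing in Y.  It makes the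
      Euler polygons a Cauchy sequence; their limit is a Lipschitz solution
      (an existence theorem for bounded, uniformly continuous, monotone Phi),
      differentiable in (0,1) with Y' = Phi(t, Y).
   3. The barrier psi(v) = sqrt(eps^2 + eps S v^2) - eps: under the lower bound
      on c it is a supersolution, while 0 is a subsolution because f >= 0.
      Hence 0 <= Y <= psi(1 - t), so Y(1) = 0; and Y > 0 on (0,1), since at an
      interior zero Y' = f > 0 would make Y negative just to the left.
   4. y(v) = Y(1 - v) solves the original problem, which gives the theorem. *)

Lemma Rabs_scale_le (d x e : R) : 0 <= d -> Rabs x <= e -> Rabs (d * x) <= d * e.
Proof.
  intros Hd Hx. rewrite Rabs_mult, (Rabs_pos_eq d Hd).
  apply Rmult_le_compat_l; auto.
Qed.

Definition cell (h t : R) : nat := Z.to_nat (floor (t / h)).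

Lemma cell_spec (h t : R) : 0 < h -> 0 <= t ->
  INR (cell h t) * h <= t < (INR (cell h t) + 1) * h.
Proof.
  intros Hh Ht. unfold cell, floor. destruct (floor_ex (t / h)) as [n Hn]. simpl.
  assert (Hq : 0 <= t / h) by (apply Rdiv_le_0_compat; lra).
  assert (Hn0 : (0 <= n)%Z).
  { assert (IZR (-1) < IZR n) by (simpl; lra). apply lt_IZR in H. lia. }
  rewrite INR_IZR_INZ, Z2Nat.id by exact Hn0.
  assert (E : t = t / h * h) by (field; lra).
  split; rewrite E at 1; [apply Rmult_le_compat_r | apply Rmult_lt_compat_r]; lra.
Qed.

Lemma cell_unique (h t : R) (k : nat) : 0 < h -> 0 <= t ->
  INR k * h <= t < (INR k + 1) * h -> cell h t = k.
Proof.
  intros Hh Ht [Hk1 Hk2]. destruct (cell_spec h t Hh Ht) as [Hc1 Hc2].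
  assert (A : INR k < INR (S (cell h t))) by (rewrite S_INR; apply Rmult_lt_reg_r with h; lra).
  assert (B : INR (cell h t) < INR (S k)) by (rewrite S_INR; apply Rmult_lt_reg_r with h; lra).
  apply INR_lt in A. apply INR_lt in B. lia.
Qed.

Lemma cell_node (h : R) (i : nat) : 0 < h -> cell h (INR i * h) = i.
Proof.
  intros Hh. pose proof (pos_INR i).
  apply cell_unique; auto; [apply Rmult_le_pos|split]; lra.
Qed.

Lemma cell_mono (h s t : R) : 0 < h -> 0 <= s <= t -> (cell h s <= cell h t)%nat.
Proof.
  intros Hh Hst. destruct (cell_spec h s Hh ltac:(lra)) as [Hs1 _].
  destruct (cell_spec h t Hh ltac:(lra)) as [_ Ht2].
  assert (A : INR (cell h s) < INR (S (cell h t))).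
  { rewrite S_INR. apply Rmult_lt_reg_r with h; lra. }
  apply INR_lt in A. lia.
Qed.

Section EulerPolygon.
Variable Phi : R -> R -> R.

Fixpoint euler_node (h : R) (i : nat) : R :=
  match i with
  | O => 0
  | S i' => euler_node h i' + h * Phi (INR i' * h) (euler_node h i')
  end.

Definition euler_slope (h : R) (i : nat) : R := Phi (INR i * h) (euler_node h i).

Definition euler (h t : R) : R :=
  euler_node h (cell h t) + (t - INR (cell h t) * h) * euler_slope h (cell h t).

Lemma euler_at_node (h : R) (i : nat) : 0 < h -> euler h (INR i * h) = euler_node h i.
Proof. intros Hh. unfold euler. rewrite cell_node by auto. ring. Qed.

Lemma euler_at_0 (h : R) : 0 < h -> euler h 0 = 0.
Proof.
  intros Hh. replace 0 with (INR 0 * h) at 1 by (simpl; ring).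
  apply euler_at_node; auto.
Qed.

Lemma node_increment (h L e : R) (j m : nat) : 0 < h -> (j <= m)%nat ->
  (forall i, (j <= i < m)%nat -> Rabs (euler_slope h i - L) <= e) ->
  Rabs (euler_node h m - euler_node h j - L * ((INR m - INR j) * h))
    <= e * ((INR m - INR j) * h).
Proof.
  intros Hh Hjm. induction Hjm as [|m Hjm IH]; intros Hs.
  - replace (euler_node h j - euler_node h j - L * ((INR j - INR j) * h)) with 0 by ring.
    rewrite Rabs_R0. lra.
  - rewrite S_INR.
    specialize (IH (fun i Hi => Hs i ltac:(lia))).
    pose proof (Rabs_scale_le h _ _ ltac:(lra) (Hs m ltac:(lia))) as Hlast.
    replace (euler_node h (S m) - euler_node h j - L * ((INR m + 1 - INR j) * h)) with
      ((euler_node h m - euler_node h j - L * ((INR m - INR j) * h))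
       + h * (euler_slope h m - L)) by (simpl; unfold euler_slope; ring).
    eapply Rle_trans; [apply Rabs_triang|]. lra.
Qed.

Lemma euler_increment (h L e s t : R) : 0 < h -> 0 <= s <= t ->
  (forall i, (cell h s <= i <= cell h t)%nat -> Rabs (euler_slope h i - L) <= e) ->
  Rabs (euler h t - euler h s - L * (t - s)) <= e * (t - s).
Proof.
  intros Hh Hst Hs.
  pose proof (cell_mono h s t Hh Hst) as Hjm.
  pose proof (cell_spec h s Hh ltac:(lra)) as [Hs1 Hs2].
  pose proof (cell_spec h t Hh ltac:(lra)) as [Ht1 Ht2].
  unfold euler. revert Hs Hjm Hs1 Hs2 Ht1 Ht2.
  set (j := cell h s). set (m := cell h t). intros Hs Hjm Hs1 Hs2 Ht1 Ht2.
  pose proof (Hs m ltac:(lia)) as Hm. pose proof (Hs j ltac:(lia)) as Hj.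
  destruct (Nat.eq_dec j m) as [E|E].
  - rewrite <- E in *.
    replace (euler_node h j + (t - INR j * h) * euler_slope h j -
      (euler_node h j + (s - INR j * h) * euler_slope h j) - L * (t - s)) with
      ((t - s) * (euler_slope h j - L)) by ring.
    rewrite (Rmult_comm e). apply Rabs_scale_le; lra.
  - pose proof (node_increment h L e (S j) m Hh ltac:(lia)
      (fun i Hi => Hs i ltac:(lia))) as Hmid.
    rewrite S_INR in Hmid.
    replace (euler_node h m + (t - INR m * h) * euler_slope h m -
      (euler_node h j + (s - INR j * h) * euler_slope h j) - L * (t - s)) with
      ((t - INR m * h) * (euler_slope h m - L) +
       (euler_node h m - euler_node h (S j) - L * ((INR m - (INR j + 1)) * h)) +
       ((INR j + 1) * h - s) * (euler_slope h j - L)) by (simpl; unfold euler_slope; ring).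
    pose proof (Rabs_scale_le (t - INR m * h) _ _ ltac:(lra) Hm) as A1.
    pose proof (Rabs_scale_le ((INR j + 1) * h - s) _ _ ltac:(lra) Hj) as A3.
    eapply Rle_trans; [apply Rabs_triang|].
    eapply Rle_trans; [apply Rplus_le_compat_r; apply Rabs_triang|].
    lra.
Qed.

End EulerPolygon.

Definition bounded_by (Phi : R -> R -> R) (M : R) : Prop := forall t Y, Rabs (Phi t Y) <= M.
Definition unif_cont2 (Phi : R -> R -> R) : Prop := forall e, 0 < e -> exists d, 0 < d /\
  forall t1 t2 Y1 Y2, Rabs (t1 - t2) < d -> Rabs (Y1 - Y2) < d ->
    Rabs (Phi t1 Y1 - Phi t2 Y2) < e.
(* Phi(t, .) is nonincreasing; this is what makes the comparison principle work. *)
Definition nonincreasing2 (Phi : R -> R -> R) : Prop :=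
  forall t Y1 Y2, Y1 <= Y2 -> Phi t Y2 <= Phi t Y1.

Definition lipschitz01 (Y : R -> R) (M : R) : Prop :=
  forall s t, 0 <= s <= t -> t <= 1 -> Rabs (Y t - Y s) <= M * (t - s).

Definition approx_at (Phi : R -> R -> R) (e d : R) (u : R -> R) : Prop :=
  forall s t, 0 <= s <= t -> t <= 1 -> t - s <= d ->
  Rabs (u t - u s - Phi s (u s) * (t - s)) <= e * (t - s).
Definition sub_at (Phi : R -> R -> R) (e d : R) (u : R -> R) : Prop :=
  forall s t, 0 <= s <= t -> t <= 1 -> t - s <= d ->
  u t - u s <= Phi s (u s) * (t - s) + e * (t - s).
Definition super_at (Phi : R -> R -> R) (e d : R) (w : R -> R) : Prop :=
  forall s t, 0 <= s <= t -> t <= 1 -> t - s <= d ->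
  Phi s (w s) * (t - s) - e * (t - s) <= w t - w s.

Definition solution (Phi : R -> R -> R) (Y : R -> R) : Prop :=
  forall e, 0 < e -> exists d, 0 < d /\ approx_at Phi e d Y.
Definition subsolution (Phi : R -> R -> R) (u : R -> R) : Prop :=
  forall e, 0 < e -> exists d, 0 < d /\ sub_at Phi e d u.
Definition supersolution (Phi : R -> R -> R) (w : R -> R) : Prop :=
  forall e, 0 < e -> exists d, 0 < d /\ super_at Phi e d w.

Lemma approx_sub_at Phi e d u : approx_at Phi e d u -> sub_at Phi e d u.
Proof.
  intros H s t Hst Ht Hd. specialize (H s t Hst Ht Hd).
  apply Rabs_le_between in H. lra.
Qed.

Lemma approx_super_at Phi e d u : approx_at Phi e d u -> super_at Phi e d u.
Proof.
  intros H s t Hst Ht Hd. specialize (H s t Hst Ht Hd).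
  apply Rabs_le_between in H. lra.
Qed.

Lemma solution_sub Phi Y : solution Phi Y -> subsolution Phi Y.
Proof.
  intros H e He. destruct (H e He) as [d [Hd Hap]].
  exists d. split; auto. apply approx_sub_at, Hap.
Qed.

Lemma solution_super Phi Y : solution Phi Y -> supersolution Phi Y.
Proof.
  intros H e He. destruct (H e He) as [d [Hd Hap]].
  exists d. split; auto. apply approx_super_at, Hap.
Qed.

Lemma lipschitz01_abs Y M : lipschitz01 Y M -> forall s t, 0 <= s <= 1 -> 0 <= t <= 1 ->
  Rabs (Y t - Y s) <= M * Rabs (t - s).
Proof.
  intros H s t Hs Ht. destruct (Rle_or_lt s t).
  - rewrite (Rabs_pos_eq (t - s)) by lra. apply H; lra.
  - rewrite Rabs_minus_sym, (Rabs_minus_sym t s), (Rabs_pos_eq (s - t)) by lra. apply H; lra.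
Qed.

Lemma lipschitz01_weaken Y M M' : M <= M' -> lipschitz01 Y M -> lipschitz01 Y M'.
Proof.
  intros HM H s t Hst Ht. eapply Rle_trans; [apply H; auto|].
  apply Rmult_le_compat_r; lra.
Qed.

(* March along a grid of mesh D <= d with
   2 L D <= th: where u >= w, monotonicity of Phi gives a slope of u - w at most
   e1 + e2; where u < w, one step raises u - w by at most 2 L D <= th. *)
Lemma compare_approx (Phi : R -> R -> R) u w L e1 e2 d : 0 < L -> 0 < d -> 0 <= e1 -> 0 <= e2 ->
  nonincreasing2 Phi -> lipschitz01 u L -> lipschitz01 w L ->
  sub_at Phi e1 d u -> super_at Phi e2 d w ->
  u 0 <= w 0 -> forall t, 0 <= t <= 1 -> u t - w t <= (e1 + e2) * t.
Proof.
  intros HL Hd He1 He2 Hmono Lu Lw Su Sw H0 t Ht.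
  apply Rle_plus_epsilon. intros th Hth.
  destruct (INR_unbounded (1 / d + 2 * L / th)) as [n Hn].
  assert (P1 : 0 < 1 / d) by (apply Rdiv_lt_0_compat; lra).
  assert (P2 : 0 < 2 * L / th) by (apply Rdiv_lt_0_compat; lra).
  set (D := t / INR n).
  assert (HD : D * INR n = t) by (unfold D; field; lra).
  assert (HD0 : 0 <= D) by (unfold D; apply Rdiv_le_0_compat; lra).
  assert (HDd : D <= d).
  { assert (1 / d * d = 1) by (field; lra). assert (INR n * d > 1) by nra. nra. }
  assert (HDth : 2 * L * D <= th).
  { assert (2 * L / th * th = 2 * L) by (field; lra). assert (INR n * th > 2 * L) by nra. nra. }
  assert (Grid : forall k, (k <= n)%nat ->
    u (INR k * D) - w (INR k * D) <= (e1 + e2) * (INR k * D) + th).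
  { induction k as [|k IH]; intros Hk.
    - simpl. rewrite Rmult_0_l. lra.
    - specialize (IH ltac:(lia)).
      apply le_INR in Hk. rewrite S_INR in *.
      assert (Hs0 : 0 <= INR k * D) by (pose proof (pos_INR k); nra).
      assert (Hs1 : (INR k + 1) * D <= t) by nra.
      set (s := INR k * D) in *.
      replace ((INR k + 1) * D) with (s + D) in * by (unfold s; ring).
      destruct (Rle_or_lt 0 (u s - w s)) as [Hp|Hp].
      + pose proof (Hmono s (w s) (u s) ltac:(lra)).
        pose proof (Su s (s + D) ltac:(lra) ltac:(lra) ltac:(lra)).
        pose proof (Sw s (s + D) ltac:(lra) ltac:(lra) ltac:(lra)).
        replace (s + D - s) with D in * by ring. nra.
      + pose proof (Lu s (s + D) ltac:(lra) ltac:(lra)) as Hu.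
        pose proof (Lw s (s + D) ltac:(lra) ltac:(lra)) as Hw.
        replace (s + D - s) with D in * by ring.
        apply Rabs_le_between in Hu. apply Rabs_le_between in Hw. nra. }
  specialize (Grid n (Nat.le_refl n)). rewrite Rmult_comm, HD in Grid. exact Grid.
Qed.

Lemma comparison (Phi : R -> R -> R) u w L : 0 < L -> nonincreasing2 Phi ->
  lipschitz01 u L -> lipschitz01 w L -> subsolution Phi u -> supersolution Phi w ->
  u 0 <= w 0 -> forall t, 0 <= t <= 1 -> u t <= w t.
Proof.
  intros HL Hmono Lu Lw Su Sw H0 t Ht.
  cut (u t - w t <= 0); [lra|]. apply Rle_plus_epsilon. intros th Hth.
  destruct (Su (th / 2) ltac:(lra)) as [d1 [Hd1 S1]].
  destruct (Sw (th / 2) ltac:(lra)) as [d2 [Hd2 S2]].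
  assert (Hm1 := Rmin_l d1 d2). assert (Hm2 := Rmin_r d1 d2).
  assert (C : u t - w t <= (th / 2 + th / 2) * t).
  { apply (compare_approx Phi u w L _ _ (Rmin d1 d2)); auto; try lra.
    - apply Rmin_glb_lt; auto.
    - intros s t' Hs Ht' Hd. apply S1; lra.
    - intros s t' Hs Ht' Hd. apply S2; lra. }
  nra.
Qed.

Section EulerConvergence.
Variables (Phi : R -> R -> R) (M : R).
Hypothesis M_pos : 0 < M.
Hypothesis Phi_bounded : bounded_by Phi M.
Hypothesis Phi_uc : unif_cont2 Phi.
Hypothesis Phi_noninc : nonincreasing2 Phi.

Lemma euler_lipschitz (h s t : R) : 0 < h -> 0 <= s -> 0 <= t ->
  Rabs (euler Phi h t - euler Phi h s) <= M * Rabs (t - s).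
Proof.
  intros Hh. revert s t.
  assert (Mono : forall s t, 0 <= s <= t ->
    Rabs (euler Phi h t - euler Phi h s) <= M * (t - s)).
  { intros s t Hst.
    replace (euler Phi h t - euler Phi h s) with
      (euler Phi h t - euler Phi h s - 0 * (t - s)) by ring.
    apply euler_increment; auto. intros i _. rewrite Rminus_0_r. apply Phi_bounded. }
  intros s t Hs Ht. destruct (Rle_or_lt s t).
  - rewrite (Rabs_pos_eq (t - s)) by lra. apply Mono; lra.
  - rewrite Rabs_minus_sym, (Rabs_minus_sym t s), (Rabs_pos_eq (s - t)) by lra.
    apply Mono; lra.
Qed.

(* Consistency of the scheme: for fine steps and short intervals, the polygon
   follows the slope Phi(s, euler s) up to a small relative error, because all
   cell slopes involved are evaluated at nearby points. *)
Lemma euler_consistent (e : R) : 0 < e -> exists d, 0 < d /\ forall h, 0 < h -> h <= d ->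
  approx_at Phi e d (euler Phi h).
Proof.
  intros He. destruct (Phi_uc e He) as [d1 [Hd1 Hd]].
  assert (Hmin : 0 < Rmin d1 (d1 / M)).
  { apply Rmin_glb_lt; [lra|apply Rdiv_lt_0_compat; lra]. }
  exists (Rmin d1 (d1 / M) / 2). split; [lra|].
  intros h Hh Hhd s t Hst _ Htd.
  assert (Hm1 : Rmin d1 (d1 / M) <= d1) by apply Rmin_l.
  assert (Hm2 : Rmin d1 (d1 / M) <= d1 / M) by apply Rmin_r.
  apply euler_increment; auto. intros i [Hi1 Hi2].
  pose proof (cell_spec h s Hh ltac:(lra)) as [Hs1 Hs2].
  pose proof (cell_spec h t Hh ltac:(lra)) as [Ht1 Ht2].
  apply le_INR in Hi1. apply le_INR in Hi2.
  assert (T1 : INR (cell h s) * h <= INR i * h) by (apply Rmult_le_compat_r; lra).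
  assert (T2 : INR i * h <= INR (cell h t) * h) by (apply Rmult_le_compat_r; lra).
  assert (Hti0 : 0 <= INR i * h) by (apply Rmult_le_pos; [apply pos_INR|lra]).
  assert (Hti : Rabs (INR i * h - s) < d1) by (apply Rabs_def1; lra).
  assert (Hti' : M * Rabs (INR i * h - s) < d1).
  { assert (Rabs (INR i * h - s) < d1 / M) by (apply Rabs_def1; lra).
    apply Rmult_lt_compat_l with (r := M) in H; auto.
    replace (M * (d1 / M)) with d1 in H by (field; lra). exact H. }
  unfold euler_slope. rewrite <- (euler_at_node Phi h i Hh).
  left. apply Hd; auto.
  eapply Rle_lt_trans; [apply euler_lipschitz; auto; lra|exact Hti'].
Qed.

Definition euler_seq (n : nat) : R -> R := euler Phi (/ INR (S n)).

Lemma step_pos (n : nat) : 0 < / INR (S n).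
Proof. apply Rinv_0_lt_compat, lt_0_INR. lia. Qed.

Lemma euler_seq_lipschitz (n : nat) : lipschitz01 (euler_seq n) M.
Proof.
  intros s t Hst _. rewrite <- (Rabs_pos_eq (t - s)) by lra.
  apply euler_lipschitz; [apply step_pos|lra|lra].
Qed.

Lemma euler_seq_consistent (e : R) : 0 < e -> exists d, 0 < d /\
  exists N, forall n, (N <= n)%nat -> approx_at Phi e d (euler_seq n).
Proof.
  intros He. destruct (euler_consistent e He) as [d [Hd H]].
  exists d. split; auto. destruct (INR_unbounded (1 / d)) as [N HN]. exists N.
  intros n Hn. apply H; [apply step_pos|].
  assert (INR N <= INR (S n)) by (apply le_INR; lia).
  assert (0 < INR (S n)) by (apply lt_0_INR; lia).
  assert (1 / d * d = 1) by (field; lra).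
  assert (/ INR (S n) * INR (S n) = 1) by (field; lra).
  pose proof (step_pos n). nra.
Qed.

(* The polygons form a Cauchy sequence at each t: two late polygons are both
   approximate solutions, so by comparison their difference is at most e t. *)
Lemma euler_seq_cauchy (t : R) : 0 <= t <= 1 -> ex_finite_lim_seq (fun n => euler_seq n t).
Proof.
  intros Ht. apply ex_lim_seq_cauchy_corr. intros [e He]. simpl.
  destruct (euler_seq_consistent (e / 4) ltac:(lra)) as [d [Hd [N HN]]].
  assert (Close : forall n m, (N <= n)%nat -> (N <= m)%nat ->
            euler_seq n t - euler_seq m t <= (e / 4 + e / 4) * t).
  { intros n m Hn Hm.
    apply (compare_approx Phi (euler_seq n) (euler_seq m) M (e / 4) (e / 4) d);
      auto using euler_seq_lipschitz, approx_sub_at, approx_super_at; try lra.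
    unfold euler_seq. rewrite !euler_at_0 by apply step_pos. lra. }
  exists N. intros n m Hn Hm.
  pose proof (Close n m Hn Hm). pose proof (Close m n Hm Hn).
  apply Rabs_def1; nra.
Qed.

Definition euler_limit (t : R) : R := real (Lim_seq (fun n => euler_seq n t)).

Lemma euler_limit_spec (t : R) : 0 <= t <= 1 -> forall th, 0 < th ->
  exists N, forall n, (N <= n)%nat -> Rabs (euler_seq n t - euler_limit t) < th.
Proof.
  intros Ht th Hth. destruct (euler_seq_cauchy t Ht) as [l Hl].
  unfold euler_limit. rewrite (is_lim_seq_unique _ _ Hl). simpl.
  apply is_lim_seq_spec in Hl. exact (Hl (mkposreal th Hth)).
Qed.

Lemma euler_limit_0 : euler_limit 0 = 0.
Proof.
  unfold euler_limit. rewrite (Lim_seq_ext _ (fun _ => 0)).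
  - rewrite Lim_seq_const. reflexivity.
  - intros n. apply euler_at_0, step_pos.
Qed.

Lemma euler_limit_lipschitz : lipschitz01 euler_limit M.
Proof.
  intros s t Hst Ht1. apply Rabs_le_between.
  cut (forall th, 0 < th -> Rabs (euler_limit t - euler_limit s) <= M * (t - s) + th).
  { intros H. split; apply Rle_plus_epsilon; intros th Hth; specialize (H th Hth);
    apply Rabs_le_between in H; lra. }
  intros th Hth.
  destruct (euler_limit_spec t ltac:(lra) (th / 2) ltac:(lra)) as [N1 H1].
  destruct (euler_limit_spec s ltac:(lra) (th / 2) ltac:(lra)) as [N2 H2].
  specialize (H1 (max N1 N2) ltac:(lia)). specialize (H2 (max N1 N2) ltac:(lia)).
  pose proof (euler_seq_lipschitz (max N1 N2) s t Hst Ht1) as L.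
  apply Rabs_le_between in L. apply Rabs_def2 in H1. apply Rabs_def2 in H2.
  apply Rabs_le_between. lra.
Qed.

(* The consistency estimate passes to the limit (the slope Phi(s, .) being
   continuous in its second argument): the limit is a solution. *)
Lemma euler_limit_solution : solution Phi euler_limit.
Proof.
  intros e He. destruct (euler_seq_consistent e He) as [d [Hd [N0 HN]]].
  exists d. split; auto. intros s t Hst Ht1 Htd.
  cut (forall th, 0 < th -> Rabs (euler_limit t - euler_limit s
         - Phi s (euler_limit s) * (t - s)) <= e * (t - s) + th).
  { intros H. apply Rabs_le_between. split; apply Rle_plus_epsilon; intros th Hth;
    specialize (H th Hth); apply Rabs_le_between in H; lra. }
  intros th Hth. set (th0 := th / 4).
  destruct (Phi_uc th0 ltac:(unfold th0; lra)) as [dt [Hdt Hc]].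
  destruct (euler_limit_spec t ltac:(lra) th0 ltac:(unfold th0; lra)) as [N1 H1].
  destruct (euler_limit_spec s ltac:(lra) (Rmin th0 dt)
    ltac:(apply Rmin_glb_lt; unfold th0; lra)) as [N2 H2].
  set (n := max N0 (max N1 N2)).
  specialize (H1 n ltac:(unfold n; lia)). specialize (H2 n ltac:(unfold n; lia)).
  specialize (HN n ltac:(unfold n; lia) s t Hst Ht1 Htd).
  assert (H2dt : Rabs (euler_seq n s - euler_limit s) < dt)
    by (eapply Rlt_le_trans; [exact H2|apply Rmin_r]).
  assert (H2th : Rabs (euler_seq n s - euler_limit s) < th0)
    by (eapply Rlt_le_trans; [exact H2|apply Rmin_l]).
  assert (Hcs := Hc s s (euler_seq n s) (euler_limit s)
    ltac:(rewrite Rminus_diag, Rabs_R0; lra) H2dt).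
  apply Rabs_le_between in HN. apply Rabs_def2 in H1. apply Rabs_def2 in H2th.
  apply Rabs_def2 in Hcs. apply Rabs_le_between. unfold th0 in *. split; nra.
Qed.

End EulerConvergence.

Theorem solution_exists (Phi : R -> R -> R) (M : R) : 0 < M -> bounded_by Phi M ->
  unif_cont2 Phi -> nonincreasing2 Phi ->
  exists Y, Y 0 = 0 /\ lipschitz01 Y M /\ solution Phi Y.
Proof.
  intros HM HB HU Hmo. exists (euler_limit Phi).
  split; [|split].
  - apply euler_limit_0.
  - eapply euler_limit_lipschitz; eauto.
  - eapply euler_limit_solution; eauto.
Qed.

Section SolutionDerivative.
Variables (Phi : R -> R -> R) (Y : R -> R) (M : R).
Hypothesis M_pos : 0 < M.
Hypothesis Phi_uc : unif_cont2 Phi.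
Hypothesis Y_lipschitz : lipschitz01 Y M.
Hypothesis Y_solution : solution Phi Y.

(* The defining estimate of a solution also holds with the slope taken at the
   right end point, by uniform continuity of Phi and the Lipschitz bound on Y. *)
Lemma solution_right_slope (e : R) : 0 < e -> exists d, 0 < d /\
  forall s t, 0 <= s <= t -> t <= 1 -> t - s <= d ->
  Rabs (Y t - Y s - Phi t (Y t) * (t - s)) <= e * (t - s).
Proof.
  intros He.
  destruct (Y_solution (e / 2) ltac:(lra)) as [d1 [Hd1 H1]].
  destruct (Phi_uc (e / 2) ltac:(lra)) as [d2 [Hd2 H2]].
  assert (Hd2M : 0 < d2 / (2 * M)) by (apply Rdiv_lt_0_compat; lra).
  exists (Rmin d1 (Rmin (d2 / 2) (d2 / (2 * M)))). split.
  { repeat apply Rmin_glb_lt; lra. }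
  intros s t Hst Ht Htd.
  assert (Q1 := Rmin_l d1 (Rmin (d2 / 2) (d2 / (2 * M)))).
  assert (Q2 := Rmin_r d1 (Rmin (d2 / 2) (d2 / (2 * M)))).
  assert (Q3 := Rmin_l (d2 / 2) (d2 / (2 * M))).
  assert (Q4 := Rmin_r (d2 / 2) (d2 / (2 * M))).
  assert (HM : M * (t - s) <= d2 / 2).
  { apply Rle_trans with (M * (d2 / (2 * M))); [apply Rmult_le_compat_l; lra|].
    right. field. lra. }
  specialize (H1 s t Hst Ht ltac:(lra)).
  pose proof (Y_lipschitz s t Hst Ht) as HL.
  assert (Hc := H2 t s (Y t) (Y s) ltac:(apply Rabs_def1; lra) ltac:(lra)).
  apply Rabs_def2 in Hc. apply Rabs_le_between in H1. apply Rabs_le_between.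
  assert (P := Rmult_le_compat_r (t - s) _ _ ltac:(lra) (Rlt_le _ _ (proj1 Hc))).
  assert (P' := Rmult_le_compat_r (t - s) _ _ ltac:(lra) (Rlt_le _ _ (proj2 Hc))).
  split; nra.
Qed.

Lemma solution_derivative (x : R) : 0 < x < 1 -> derivable_pt_lim Y x (Phi x (Y x)).
Proof.
  intros Hx e He.
  destruct (Y_solution (e / 2) ltac:(lra)) as [d1 [Hd1 H1]].
  destruct (solution_right_slope (e / 2) ltac:(lra)) as [d2 [Hd2 H2]].
  set (dl := Rmin (Rmin d1 d2) (Rmin x (1 - x))).
  assert (Hdl : 0 < dl) by (unfold dl; repeat apply Rmin_glb_lt; lra).
  assert (Q1 : dl <= d1) by (unfold dl; eapply Rle_trans; [apply Rmin_l|apply Rmin_l]).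
  assert (Q2 : dl <= d2) by (unfold dl; eapply Rle_trans; [apply Rmin_l|apply Rmin_r]).
  assert (Q3 : dl <= x) by (unfold dl; eapply Rle_trans; [apply Rmin_r|apply Rmin_l]).
  assert (Q4 : dl <= 1 - x) by (unfold dl; eapply Rle_trans; [apply Rmin_r|apply Rmin_r]).
  exists (mkposreal dl Hdl). simpl. intros hh Hh0 Hhd. apply Rabs_def2 in Hhd.
  assert (Est : Rabs (Y (x + hh) - Y x - Phi x (Y x) * hh) <= e / 2 * Rabs hh).
  { destruct (Rle_or_lt 0 hh) as [Hp|Hn].
    - specialize (H1 x (x + hh) ltac:(lra) ltac:(lra) ltac:(lra)).
      replace (x + hh - x) with hh in H1 by ring.
      rewrite (Rabs_pos_eq hh) by lra. exact H1.
    - specialize (H2 (x + hh) x ltac:(lra) ltac:(lra) ltac:(lra)).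
      replace (x - (x + hh)) with (- hh) in H2 by ring.
      rewrite (Rabs_left hh) by lra. rewrite <- Rabs_Ropp.
      replace (- (Y (x + hh) - Y x - Phi x (Y x) * hh)) with
        (Y x - Y (x + hh) - Phi x (Y x) * - hh) by ring. exact H2. }
  assert (Hpos : 0 < Rabs hh) by (apply Rabs_pos_lt; auto).
  replace ((Y (x + hh) - Y x) / hh - Phi x (Y x)) with
    ((Y (x + hh) - Y x - Phi x (Y x) * hh) / hh) by (field; auto).
  unfold Rdiv. rewrite Rabs_mult, Rabs_inv.
  apply Rmult_lt_reg_r with (Rabs hh); auto.
  rewrite Rmult_assoc, Rinv_l by lra. nra.
Qed.

End SolutionDerivative.

Lemma smaller_on_left (Y : R -> R) (x l : R) : derivable_pt_lim Y x l -> 0 < l -> 0 < x ->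
  exists s, 0 <= s < x /\ Y s < Y x.
Proof.
  intros HY Hl Hx. destruct (HY l Hl) as [[d Hd] Hdd]. simpl in Hdd.
  set (hh := - Rmin d x / 2).
  assert (Hm1 := Rmin_l d x). assert (Hm2 := Rmin_r d x).
  assert (Hm : 0 < Rmin d x) by (apply Rmin_glb_lt; lra).
  specialize (Hdd hh ltac:(unfold hh; lra) ltac:(unfold hh; rewrite Rabs_left; lra)).
  apply Rabs_def2 in Hdd. destruct Hdd as [_ Hdd].
  assert (Hq : 0 < (Y (x + hh) - Y x) / hh) by lra.
  exists (x + hh). split; [unfold hh; lra|].
  assert (Hhh : hh < 0) by (unfold hh; lra).
  assert (E : Y (x + hh) - Y x = (Y (x + hh) - Y x) / hh * hh) by (field; lra).
  nra.
Qed.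

(* Projection of R onto [lo, hi]; composing with it extends functions given on
   [lo, hi] to R without losing continuity. *)
Definition clamp (lo hi x : R) : R := Rmax lo (Rmin hi x).

Lemma clamp_range lo hi x : lo <= hi -> lo <= clamp lo hi x <= hi.
Proof. intros H. unfold clamp, Rmax, Rmin. repeat destruct Rle_dec; lra. Qed.

Lemma clamp_id lo hi x : lo <= x <= hi -> clamp lo hi x = x.
Proof. intros H. unfold clamp, Rmax, Rmin. repeat destruct Rle_dec; lra. Qed.

Lemma clamp_contract lo hi x y : lo <= hi -> Rabs (clamp lo hi x - clamp lo hi y) <= Rabs (x - y).
Proof.
  intros H. pose proof (Rle_abs (x - y)). pose proof (Rle_abs (-(x - y))).
  rewrite Rabs_Ropp in H1. apply Rabs_le_between.
  unfold clamp, Rmax, Rmin. repeat destruct Rle_dec; lra.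
Qed.

Lemma clamp_mono lo hi x y : lo <= hi -> x <= y -> clamp lo hi x <= clamp lo hi y.
Proof. intros H Hxy. unfold clamp, Rmax, Rmin. repeat destruct Rle_dec; lra. Qed.

Definition unif_cont (F : R -> R) : Prop := forall e, 0 < e -> exists d, 0 < d /\
  forall x y, Rabs (x - y) < d -> Rabs (F x - F y) < e.
Definition cont_on (lo hi : R) (F : R -> R) : Prop := forall x, lo <= x <= hi ->
  forall e, 0 < e -> exists d, 0 < d /\
  forall y, lo <= y <= hi -> Rabs (y - x) < d -> Rabs (F y - F x) < e.

Lemma cont_on_clamp lo hi F : lo <= hi -> cont_on lo hi F -> forall x, lo <= x <= hi ->
  continuity_pt (fun z => F (clamp lo hi z)) x.
Proof.
  intros Hlh HF x Hx e He. destruct (HF x Hx e He) as [d [Hd H]].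
  exists d. split; [lra|]. intros y [_ Hy]. simpl in *. unfold R_dist in *.
  rewrite (clamp_id lo hi x Hx). apply H; [apply clamp_range; auto|].
  eapply Rle_lt_trans; [|exact Hy].
  rewrite <- (clamp_id lo hi x Hx) at 1. apply clamp_contract; auto.
Qed.

Lemma unif_cont_clamp lo hi F : lo <= hi -> cont_on lo hi F -> unif_cont (fun z => F (clamp lo hi z)).
Proof.
  intros Hlh HF e He.
  destruct (Heine (fun z => F (clamp lo hi z)) (fun c => lo <= c <= hi) (compact_P3 lo hi)
    (cont_on_clamp lo hi F Hlh HF) (mkposreal e He)) as [[d Hd] Hdd]. simpl in *.
  exists d. split; auto. intros x y Hxy.
  pose proof (clamp_range lo hi x Hlh) as Hx. pose proof (clamp_range lo hi y Hlh) as Hy.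
  specialize (Hdd _ _ Hx Hy ltac:(eapply Rle_lt_trans; [apply clamp_contract; auto|exact Hxy])).
  rewrite (clamp_id lo hi _ Hx), (clamp_id lo hi _ Hy) in Hdd. exact Hdd.
Qed.

Lemma cont_on_of_continuity_pt lo hi F :
  (forall x, lo <= x <= hi -> continuity_pt F x) -> cont_on lo hi F.
Proof.
  intros H x Hx e He. destruct (H x Hx e He) as [a [Ha Hb]].
  exists a. split; [lra|]. intros y Hy Hyx.
  destruct (Req_dec y x) as [->|Hne]; [rewrite Rminus_diag, Rabs_R0; lra|].
  apply (Hb y). split; [split; [exact I|auto]|exact Hyx].
Qed.

Lemma unif_cont_reflect F : unif_cont F -> unif_cont (fun t => F (1 - t)).
Proof.
  intros H e He. destruct (H e He) as [d [Hd Hdd]]. exists d. split; auto.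
  intros x y Hxy. apply Hdd. replace (1 - x - (1 - y)) with (-(x - y)) by ring.
  rewrite Rabs_Ropp. exact Hxy.
Qed.

Lemma unif_cont_shift c F : unif_cont F -> unif_cont (fun t => c + F t).
Proof.
  intros H e He. destruct (H e He) as [d [Hd Hdd]]. exists d. split; auto.
  intros x y Hxy. replace (c + F x - (c + F y)) with (F x - F y) by ring. auto.
Qed.

Lemma unif_cont2_of_parts a b G B : unif_cont a -> unif_cont b -> unif_cont G -> 0 <= B ->
  (forall t, Rabs (b t) <= B) -> (forall Y, Rabs (G Y) <= 1) ->
  unif_cont2 (fun t Y => a t - b t * G Y).
Proof.
  intros Ha Hb HG HB Hbb HGb e He.
  destruct (Ha (e / 3) ltac:(lra)) as [da [Hda Da]].
  destruct (Hb (e / 3) ltac:(lra)) as [db [Hdb Db]].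
  destruct (HG (e / (3 * (B + 1))) ltac:(apply Rdiv_lt_0_compat; lra)) as [dG [HdG DG]].
  exists (Rmin da (Rmin db dG)). split; [repeat apply Rmin_glb_lt; auto|].
  intros t1 t2 Y1 Y2 Ht HY.
  assert (Q1 := Rmin_l da (Rmin db dG)). assert (Q2 := Rmin_r da (Rmin db dG)).
  assert (Q3 := Rmin_l db dG). assert (Q4 := Rmin_r db dG).
  specialize (Da t1 t2 ltac:(lra)). specialize (Db t1 t2 ltac:(lra)).
  specialize (DG Y1 Y2 ltac:(lra)).
  replace (a t1 - b t1 * G Y1 - (a t2 - b t2 * G Y2)) with
    ((a t1 - a t2) + (-((b t1 - b t2) * G Y1)) + (-(b t2 * (G Y1 - G Y2)))) by ring.
  eapply Rle_lt_trans; [apply Rabs_triang|].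
  eapply Rle_lt_trans; [apply Rplus_le_compat_r; apply Rabs_triang|].
  rewrite !Rabs_Ropp, !Rabs_mult.
  pose proof (HGb Y1). pose proof (Hbb t2).
  pose proof (Rabs_pos (b t1 - b t2)). pose proof (Rabs_pos (G Y1 - G Y2)).
  assert (E1 : Rabs (b t1 - b t2) * Rabs (G Y1) <= Rabs (b t1 - b t2)).
  { rewrite <- (Rmult_1_r (Rabs (b t1 - b t2))) at 2. apply Rmult_le_compat_l; auto. }
  assert (E2 : Rabs (b t2) * Rabs (G Y1 - G Y2) <= B * (e / (3 * (B + 1)))).
  { apply Rmult_le_compat; auto using Rabs_pos. lra. }
  assert (E3 : B * (e / (3 * (B + 1))) < e / 3).
  { apply Rmult_lt_reg_r with (3 * (B + 1)); [lra|].
    replace (B * (e / (3 * (B + 1))) * (3 * (B + 1))) with (B * e) by (field; lra).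
    lra. }
  lra.
Qed.

Lemma cont_on_of_cont_on01 f : cont_on01 f -> cont_on 0 1 f.
Proof.
  intros Hf x Hx e He. specialize (Hf x Hx).
  apply filterlim_locally with (eps := mkposreal e He) in Hf.
  destruct Hf as [[d Hd] Hdd]. exists d. split; auto.
  intros y Hy Hyx. apply (Hdd y Hyx Hy).
Qed.

Lemma cont_on_of_deriv01 g dg : (forall x, I01 x -> deriv01_at g x (dg x)) -> cont_on 0 1 g.
Proof.
  intros Hd x Hx e He. specialize (Hd x Hx). unfold deriv01_at in Hd.
  apply filterlim_locally with (eps := mkposreal 1 Rlt_0_1) in Hd.
  destruct Hd as [[d Hd] Hdd]. simpl in *.
  set (K := Rabs (dg x) + 1).
  assert (HK : 0 < K) by (unfold K; pose proof (Rabs_pos (dg x)); lra).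
  exists (Rmin d (e / K)). split; [apply Rmin_glb_lt; auto; apply Rdiv_lt_0_compat; lra|].
  intros y Hy Hyx.
  destruct (Req_dec y x) as [->|Hne]; [rewrite Rminus_diag, Rabs_R0; lra|].
  assert (Hy1 : Rabs (y - x) < d) by (eapply Rlt_le_trans; [exact Hyx|apply Rmin_l]).
  assert (Hy2 : Rabs (y - x) < e / K) by (eapply Rlt_le_trans; [exact Hyx|apply Rmin_r]).
  specialize (Hdd y Hy1 (conj Hy Hne)).
  change (Rabs ((g y - g x) / (y - x) - dg x) < 1) in Hdd.
  assert (Hq : Rabs ((g y - g x) / (y - x)) < K).
  { unfold K. pose proof (Rabs_triang_inv ((g y - g x) / (y - x)) (dg x)). lra. }
  assert (E : g y - g x = (g y - g x) / (y - x) * (y - x)) by (field; lra).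
  rewrite E, Rabs_mult.
  assert (0 < Rabs (y - x)) by (apply Rabs_pos_lt; lra).
  apply Rlt_le_trans with (K * Rabs (y - x)); [apply Rmult_lt_compat_r; auto|].
  apply Rmult_lt_compat_l with (r := K) in Hy2; auto.
  replace (K * (e / K)) with e in Hy2 by (field; lra). lra.
Qed.

Lemma reflect_cont_on01 (Y : R -> R) (M : R) : 0 < M -> lipschitz01 Y M ->
  cont_on01 (fun v => Y (1 - v)).
Proof.
  intros HM HL x [Hx1 Hx2]. apply filterlim_locally. intros [e He]. simpl.
  exists (mkposreal (e / M) ltac:(apply Rdiv_lt_0_compat; lra)).
  intros t Ht [Ht1 Ht2]. simpl in Ht. change (Rabs (t - x) < e / M) in Ht.
  change (Rabs (Y (1 - t) - Y (1 - x)) < e).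
  pose proof (lipschitz01_abs Y M HL (1 - x) (1 - t) ltac:(lra) ltac:(lra)) as Lp.
  replace (1 - t - (1 - x)) with (-(t - x)) in Lp by ring. rewrite Rabs_Ropp in Lp.
  apply Rmult_lt_compat_l with (r := M) in Ht; auto.
  replace (M * (e / M)) with e in Ht by (field; lra). lra.
Qed.

Lemma reflect_derive (Y : R -> R) (v l : R) : derivable_pt_lim Y (1 - v) l ->
  is_derive (fun v => Y (1 - v)) v (- l).
Proof.
  intros Hd. apply is_derive_Reals in Hd.
  assert (Hg : is_derive (fun v => 1 - v) v (-1)) by (auto_derive; [easy|ring]).
  pose proof (is_derive_comp Y (fun v => 1 - v) v _ _ Hd Hg) as Hc.
  replace (- l) with (scal (-1) l); [exact Hc|].
  change (-1 * l = - l). ring.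
Qed.

(* On y >= 0 it is continuous, nondecreasing, vanishes at 0 and takes values in
   [0, 1], since g(y) = sqrt(1 - eps^2 / (eps + y)^2). *)
Definition gfac (e y : R) : R := sqrt (y * (2 * e + y)) / (e + y).

Lemma gfac_cont e y : 0 < e -> 0 <= y -> continuity_pt (gfac e) y.
Proof.
  intros He Hy. apply continuity_pt_filterlim. unfold gfac.
  apply (continuous_mult (fun y => sqrt (y * (2 * e + y))) (fun y => / (e + y))).
  - apply continuous_sqrt_comp, (continuous_mult (fun y => y) (fun y => 2 * e + y)).
    + apply continuous_id.
    + apply (continuous_plus (fun _ => 2 * e) (fun y => y)); [apply continuous_const|apply continuous_id].
  - apply continuous_Rinv_comp; [|lra].
    apply (continuous_plus (fun _ => e) (fun y => y)); [apply continuous_const|apply continuous_id].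
Qed.

Lemma gfac_0 e : 0 < e -> gfac e 0 = 0.
Proof. intros He. unfold gfac. rewrite Rmult_0_l, sqrt_0. unfold Rdiv. ring. Qed.

Lemma gfac_alt e y : 0 < e -> 0 <= y -> gfac e y = sqrt (1 - e * e / ((e + y) * (e + y))).
Proof.
  intros He Hy. unfold gfac.
  replace (1 - e * e / ((e + y) * (e + y))) with (y * (2 * e + y) / ((e + y) * (e + y)))
    by (field; lra).
  rewrite sqrt_div_alt by nra. rewrite sqrt_square by lra. reflexivity.
Qed.

Lemma gfac_range e y : 0 < e -> 0 <= y -> 0 <= gfac e y <= 1.
Proof.
  intros He Hy. rewrite gfac_alt by auto. split; [apply sqrt_pos|].
  apply Rle_trans with (sqrt 1); [|rewrite sqrt_1; lra]. apply sqrt_le_1_alt.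
  assert (0 <= e * e / ((e + y) * (e + y))) by (apply Rdiv_le_0_compat; nra). lra.
Qed.

Lemma gfac_mono e y1 y2 : 0 < e -> 0 <= y1 <= y2 -> gfac e y1 <= gfac e y2.
Proof.
  intros He Hy. rewrite !gfac_alt by lra. apply sqrt_le_1_alt.
  assert (e * e / ((e + y2) * (e + y2)) <= e * e / ((e + y1) * (e + y1))).
  { unfold Rdiv. apply Rmult_le_compat_l; [nra|]. apply Rinv_le_contravar; nra. }
  lra.
Qed.

(* The barrier psi(v) = Q(v) - eps with Q(v) = sqrt(eps^2 + eps S v^2): the
   solution of psi' = sqrt(eps S) g(psi) with psi(0) = 0.  It is convex with
   derivative eps S v / Q(v). *)
Definition barrier_root (e S v : R) : R := sqrt (e * e + e * S * (v * v)).
Definition barrier (e S v : R) : R := barrier_root e S v - e.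
Definition barrier_slope (e S v : R) : R := e * S * v / barrier_root e S v.

Lemma barrier_root_ge e S v : 0 < e -> 0 <= S -> e <= barrier_root e S v.
Proof.
  intros He HS. unfold barrier_root. rewrite <- (sqrt_square e) at 1 by lra.
  apply sqrt_le_1_alt. assert (0 <= e * S * (v * v)) by (apply Rmult_le_pos; nra). lra.
Qed.

Lemma barrier_root_sq e S v : 0 < e -> 0 <= S ->
  barrier_root e S v * barrier_root e S v = e * e + e * S * (v * v).
Proof.
  intros He HS. unfold barrier_root. apply sqrt_sqrt.
  assert (0 <= e * S * (v * v)) by (apply Rmult_le_pos; nra). nra.
Qed.

Lemma le_sqrt_of_sq P r : 0 <= P -> r * r <= P -> r <= sqrt P.
Proof.
  intros HP H. destruct (Rle_or_lt r 0).
  - pose proof (sqrt_pos P). lra.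
  - rewrite <- (sqrt_square r) by lra. apply sqrt_le_1_alt. exact H.
Qed.

(* Convexity of the barrier, in tangent-line form; the key step is the
   Cauchy-Schwarz inequality eps^2 + eps S v w <= Q(v) Q(w). *)
Lemma barrier_tangent e S v w : 0 < e -> 0 <= S ->
  barrier_slope e S v * (w - v) <= barrier e S w - barrier e S v.
Proof.
  intros He HS. unfold barrier, barrier_slope.
  pose proof (barrier_root_ge e S v He HS). pose proof (barrier_root_ge e S w He HS).
  pose proof (barrier_root_sq e S v He HS). pose proof (barrier_root_sq e S w He HS).
  set (Qv := barrier_root e S v) in *. set (Qw := barrier_root e S w) in *.
  assert (CS : e * e + e * S * (v * w) <= Qv * Qw).
  { assert (HQ : Qv * Qw = sqrt ((e * e + e * S * (v * v)) * (e * e + e * S * (w * w)))).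
    { unfold Qv, Qw, barrier_root. rewrite sqrt_mult; auto; apply Rplus_le_le_0_compat; try nra;
      apply Rmult_le_pos; nra. }
    rewrite HQ. apply le_sqrt_of_sq.
    - apply Rmult_le_pos; apply Rplus_le_le_0_compat; try nra; apply Rmult_le_pos; nra.
    - assert (0 <= e * e * (e * S) * ((v - w) * (v - w))).
      { pose proof (Rle_0_sqr (v - w)) as Hsq. unfold Rsqr in Hsq.
        apply Rmult_le_pos; [apply Rmult_le_pos; apply Rmult_le_pos; lra|exact Hsq]. }
      assert ((e * e + e * S * (v * v)) * (e * e + e * S * (w * w)) -
         (e * e + e * S * (v * w)) * (e * e + e * S * (v * w))
         = e * e * (e * S) * ((v - w) * (v - w))) by ring.
      lra. }
  replace (e * S * v / Qv * (w - v)) with ((e * S * v * w - e * S * v * v) / Qv) by (field; lra).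
  apply Rmult_le_reg_r with Qv; [lra|].
  replace ((e * S * v * w - e * S * v * v) / Qv * Qv) with (e * S * v * w - e * S * v * v)
    by (field; lra).
  nra.
Qed.

Lemma barrier_range e S v : 0 < e -> 0 <= S -> 0 <= v <= 1 ->
  0 <= barrier e S v <= sqrt (e * e + e * S).
Proof.
  intros He HS Hv. pose proof (barrier_root_ge e S v He HS). unfold barrier. split; [lra|].
  assert (barrier_root e S v <= sqrt (e * e + e * S)).
  { unfold barrier_root. apply sqrt_le_1_alt.
    assert (e * S * (v * v) <= e * S * 1) by (apply Rmult_le_compat_l; nra). lra. }
  lra.
Qed.

Lemma barrier_slope_range e S v : 0 < e -> 0 <= S -> 0 <= v <= 1 -> 0 <= barrier_slope e S v <= S.
Proof.
  intros He HS Hv. pose proof (barrier_root_ge e S v He HS). unfold barrier_slope. split.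
  - apply Rdiv_le_0_compat; [|lra]. apply Rmult_le_pos; nra.
  - apply Rmult_le_reg_r with (barrier_root e S v); [lra|].
    replace (e * S * v / barrier_root e S v * barrier_root e S v) with (e * S * v) by (field; lra).
    assert (e * S * v <= e * S * 1) by (apply Rmult_le_compat_l; [apply Rmult_le_pos|]; lra).
    assert (S * e <= S * barrier_root e S v) by (apply Rmult_le_compat_l; lra). lra.
Qed.

Lemma gfac_barrier e S v : 0 < e -> 0 <= S -> 0 <= v ->
  gfac e (barrier e S v) = sqrt (e * S) * v / barrier_root e S v.
Proof.
  intros He HS Hv. unfold gfac, barrier.
  pose proof (barrier_root_sq e S v He HS). pose proof (barrier_root_ge e S v He HS).
  replace (e + (barrier_root e S v - e)) with (barrier_root e S v) by ring. f_equal.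
  replace ((barrier_root e S v - e) * (2 * e + (barrier_root e S v - e)))
    with ((sqrt (e * S) * v) * (sqrt (e * S) * v)).
  - apply sqrt_square. apply Rmult_le_pos; auto. apply sqrt_pos.
  - replace (sqrt (e * S) * v * (sqrt (e * S) * v)) with
      (sqrt (e * S) * sqrt (e * S) * (v * v)) by ring.
    rewrite sqrt_sqrt by nra. nra.
Qed.

(* Writing mu = sqrt(eps S), it follows from
   Q(v) <= eps + mu v. *)
Lemma barrier_ineq e S v A fv Mf : 0 < e -> 0 <= S -> 0 <= v <= 1 -> 0 <= fv -> fv <= S * v ->
  fv <= Mf -> A >= Mf + 2 * sqrt (e * S) ->
  barrier_slope e S v <= A * gfac e (barrier e S v) - fv.
Proof.
  intros He HS Hv Hf1 Hf2 Hf3 HA. rewrite gfac_barrier by lra. unfold barrier_slope.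
  pose proof (barrier_root_sq e S v He HS). pose proof (barrier_root_ge e S v He HS).
  set (mu := sqrt (e * S)) in *. assert (Hmu : 0 <= mu) by apply sqrt_pos.
  assert (Hmu2 : mu * mu = e * S) by (apply sqrt_sqrt; nra).
  set (Q := barrier_root e S v) in *.
  assert (HQ : Q <= e + mu * v).
  { rewrite <- (sqrt_square (e + mu * v)) by nra. unfold Q, barrier_root. apply sqrt_le_1_alt.
    assert (mu * mu * (v * v) = e * S * (v * v)) by (rewrite Hmu2; ring).
    assert (0 <= e * mu * v) by (apply Rmult_le_pos; [apply Rmult_le_pos|]; lra). lra. }
  apply Rmult_le_reg_r with Q; [lra|].
  replace ((A * (mu * v / Q) - fv) * Q) with (A * mu * v - fv * Q) by (field; lra).
  replace (e * S * v / Q * Q) with (e * S * v) by (field; lra).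
  assert (fv * Q <= fv * (e + mu * v)) by (apply Rmult_le_compat_l; auto).
  assert (fv * e <= S * v * e) by (apply Rmult_le_compat_r; lra).
  assert (fv * (mu * v) <= Mf * (mu * v)) by (apply Rmult_le_compat_r; [apply Rmult_le_pos|]; lra).
  assert (mu * v * (A - Mf - 2 * mu) >= 0) by (apply Rle_ge, Rmult_le_pos; [apply Rmult_le_pos|]; lra).
  assert (S * v * e = mu * mu * v) by (rewrite Hmu2; ring).
  lra.
Qed.

(* Extending f and h' by
   clamping and cutting g off outside [0, K] (K bounds the barrier) gives a
   right-hand side on all of R x R to which the existence theorem applies; the
   a priori bounds 0 <= Y <= barrier then show that the cut-offs are inactive. *)
Section ReversedProblem.
Variables (f h1 : R -> R) (eps c Mf mh S : R).
Hypothesis eps_pos : 0 < eps.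
Hypothesis S_nonneg : 0 <= S.
Hypothesis f_cont : cont_on 0 1 f.
Hypothesis h1_cont : cont_on 0 1 h1.
Hypothesis f_nonneg : forall v, I01 v -> 0 <= f v.
Hypothesis f_pos : forall v, 0 < v < 1 -> 0 < f v.
Hypothesis f_le_max : forall v, I01 v -> f v <= Mf.
Hypothesis f_le_slope : forall v, I01 v -> f v <= S * v.
Hypothesis h1_ge_min : forall v, I01 v -> mh <= h1 v.
Hypothesis speed : c >= Mf - mh + 2 * sqrt (eps * S).

(* Kmax bounds the barrier on [0,1]; source, coef and gcut are f(1-t), c + h'(1-t)
   and g(Y), extended beyond their natural domains by clamping. *)
Definition Kmax : R := sqrt (eps * eps + eps * S).
Definition source (t : R) : R := f (clamp 0 1 (1 - t)).
Definition coef (t : R) : R := c + h1 (clamp 0 1 (1 - t)).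
Definition gcut (Y : R) : R := gfac eps (clamp 0 Kmax Y).
Definition rhs (t Y : R) : R := source t - coef t * gcut Y.
Definition upper (t : R) : R := barrier eps S (1 - t).

Lemma Kmax_nonneg : 0 <= Kmax.
Proof. apply sqrt_pos. Qed.

Lemma clamp01_I01 (x : R) : I01 (clamp 0 1 x).
Proof. apply clamp_range. lra. Qed.

Lemma source_range (t : R) : 0 <= source t <= Mf.
Proof. unfold source. split; [apply f_nonneg | apply f_le_max]; apply clamp01_I01. Qed.

Lemma coef_ge (t : R) : Mf + 2 * sqrt (eps * S) <= coef t.
Proof. unfold coef. pose proof (h1_ge_min _ (clamp01_I01 (1 - t))). lra. Qed.

Lemma coef_nonneg (t : R) : 0 <= coef t.
Proof.
  pose proof (coef_ge t). pose proof (source_range t). pose proof (sqrt_pos (eps * S)). lra.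
Qed.

Lemma coef_bounded : exists B, forall t, coef t <= B.
Proof.
  destruct (continuity_ab_maj (fun z => h1 (clamp 0 1 z)) 0 1 ltac:(lra)
    (cont_on_clamp 0 1 h1 ltac:(lra) h1_cont)) as [x [Hx _]].
  exists (c + h1 (clamp 0 1 x)). intros t. unfold coef.
  pose proof (Hx _ (clamp01_I01 (1 - t))) as H. simpl in H.
  rewrite (clamp_id 0 1 _ (clamp01_I01 (1 - t))) in H. lra.
Qed.

Lemma gcut_range (Y : R) : 0 <= gcut Y <= 1.
Proof. apply gfac_range; auto. apply clamp_range, Kmax_nonneg. Qed.

Lemma gcut_0 : gcut 0 = 0.
Proof. unfold gcut. rewrite clamp_id by (pose proof Kmax_nonneg; lra). apply gfac_0; auto. Qed.

Lemma rhs_bounded : exists M, 0 < M /\ bounded_by rhs M.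
Proof.
  destruct coef_bounded as [B HB].
  exists (Mf + B + 1). split.
  { pose proof (source_range 0). pose proof (coef_nonneg 0). pose proof (HB 0). lra. }
  intros t Y. unfold rhs.
  pose proof (source_range t). pose proof (coef_nonneg t). pose proof (HB t).
  pose proof (gcut_range Y).
  assert (0 <= coef t * gcut Y <= B) by (split; [apply Rmult_le_pos|]; nra).
  apply Rabs_le_between. lra.
Qed.

Lemma rhs_unif_cont : unif_cont2 rhs.
Proof.
  destruct coef_bounded as [B HB].
  apply (unif_cont2_of_parts source coef gcut B).
  - exact (unif_cont_reflect _ (unif_cont_clamp 0 1 f ltac:(lra) f_cont)).
  - exact (unif_cont_shift c _ (unif_cont_reflect _ (unif_cont_clamp 0 1 h1 ltac:(lra) h1_cont))).
  - apply (unif_cont_clamp 0 Kmax (gfac eps) Kmax_nonneg), cont_on_of_continuity_pt.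
    intros x Hx. apply gfac_cont; lra.
  - pose proof (HB 0). pose proof (coef_nonneg 0). lra.
  - intros t. pose proof (HB t). pose proof (coef_nonneg t). rewrite Rabs_pos_eq; lra.
  - intros Y. pose proof (gcut_range Y). rewrite Rabs_pos_eq; lra.
Qed.

Lemma rhs_noninc : nonincreasing2 rhs.
Proof.
  intros t Y1 Y2 H. unfold rhs.
  assert (gcut Y1 <= gcut Y2).
  { apply gfac_mono; auto. pose proof Kmax_nonneg.
    split; [apply clamp_range | apply clamp_mono]; auto. }
  pose proof (coef_nonneg t).
  assert (coef t * gcut Y1 <= coef t * gcut Y2) by (apply Rmult_le_compat_l; lra). lra.
Qed.

(* Since f >= 0, the constant 0 is a subsolution. *)
Lemma zero_subsolution : subsolution rhs (fun _ => 0).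
Proof.
  intros e He. exists 1. split; [lra|]. intros s t Hst Ht _.
  unfold rhs. rewrite gcut_0. pose proof (source_range s). nra.
Qed.

Lemma upper_lipschitz : lipschitz01 upper S.
Proof.
  intros s t Hst Ht. unfold upper.
  pose proof (barrier_tangent eps S (1 - s) (1 - t) eps_pos S_nonneg).
  pose proof (barrier_tangent eps S (1 - t) (1 - s) eps_pos S_nonneg).
  pose proof (barrier_slope_range eps S (1 - s) eps_pos S_nonneg ltac:(lra)).
  pose proof (barrier_slope_range eps S (1 - t) eps_pos S_nonneg ltac:(lra)).
  assert (barrier_slope eps S (1 - s) * (t - s) <= S * (t - s)) by (apply Rmult_le_compat_r; lra).
  assert (0 <= barrier_slope eps S (1 - t) * (t - s)) by (apply Rmult_le_pos; lra).
  apply Rabs_le_between. split; nra.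
Qed.

(* The admissibility bound on c makes the barrier a supersolution: by convexity
   its increments dominate the tangent slope, which dominates rhs by
   [barrier_ineq]. *)
Lemma upper_supersolution : supersolution rhs upper.
Proof.
  intros e He. exists 1. split; [lra|]. intros s t Hst Ht _.
  unfold upper, rhs, source, coef, gcut.
  assert (HI : I01 (1 - s)) by (unfold I01; lra).
  rewrite (clamp_id 0 1 (1 - s)) by exact HI.
  pose proof (barrier_range eps S (1 - s) eps_pos S_nonneg ltac:(lra)) as Hr.
  rewrite (clamp_id 0 Kmax) by exact Hr.
  pose proof (coef_ge s) as Hc. unfold coef in Hc. rewrite (clamp_id 0 1 (1 - s) HI) in Hc.
  pose proof (barrier_ineq eps S (1 - s) (c + h1 (1 - s)) (f (1 - s)) Mf eps_pos S_nonneg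
    ltac:(lra) (f_nonneg _ HI) (f_le_slope _ HI) (f_le_max _ HI) ltac:(lra)) as Hbi.
  pose proof (barrier_tangent eps S (1 - s) (1 - t) eps_pos S_nonneg) as Htan.
  replace (1 - t - (1 - s)) with (-(t - s)) in Htan by ring.
  assert ((f (1 - s) - (c + h1 (1 - s)) * gfac eps (barrier eps S (1 - s))) * (t - s) <=
          (- barrier_slope eps S (1 - s)) * (t - s)) by (apply Rmult_le_compat_r; lra).
  nra.
Qed.

Section Solution.
Variables (Y : R -> R) (M : R).
Hypothesis M_pos : 0 < M.
Hypothesis Y_0 : Y 0 = 0.
Hypothesis Y_lipschitz : lipschitz01 Y M.
Hypothesis Y_solution : solution rhs Y.

(* A priori bounds by comparison with the subsolution 0 and the supersolution
   [upper]. *)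
Lemma solution_bounds (t : R) : 0 <= t <= 1 -> 0 <= Y t <= upper t.
Proof.
  intros Ht.
  assert (HL : lipschitz01 Y (M + S)) by (apply lipschitz01_weaken with M; auto; lra).
  split.
  - apply (comparison rhs (fun _ => 0) Y (M + S)); auto using rhs_noninc, solution_super, zero_subsolution; try lra.
    intros s t' Hst _. rewrite Rminus_diag, Rabs_R0. apply Rmult_le_pos; lra.
  - apply (comparison rhs Y upper (M + S)); auto using rhs_noninc, solution_sub,
      upper_supersolution; try lra.
    + apply lipschitz01_weaken with S; auto using upper_lipschitz. lra.
    + rewrite Y_0. apply barrier_range; auto; lra.
Qed.

Lemma solution_at_1 : Y 1 = 0.
Proof.
  pose proof (solution_bounds 1 ltac:(lra)) as [H0 H1].
  unfold upper, barrier, barrier_root in H1.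
  replace (eps * eps + eps * S * ((1 - 1) * (1 - 1))) with (eps * eps) in H1 by ring.
  rewrite sqrt_square in H1 by lra. lra.
Qed.

(* At an interior zero of Y we would have Y' = f(1 - t) > 0, so Y < 0 just to
   the left, contradicting Y >= 0. *)
Lemma solution_positive (t : R) : 0 < t < 1 -> 0 < Y t.
Proof.
  intros Ht. destruct (Rlt_or_le 0 (Y t)) as [|Hle]; auto. exfalso.
  assert (HY : Y t = 0) by (pose proof (solution_bounds t ltac:(lra)); lra).
  assert (Hd := solution_derivative rhs Y M M_pos rhs_unif_cont Y_lipschitz Y_solution t Ht).
  assert (Hslope : 0 < rhs t (Y t)).
  { unfold rhs, source. rewrite HY, gcut_0, clamp_id by lra. rewrite Rmult_0_r, Rminus_0_r. apply f_pos. lra. }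
  destruct (smaller_on_left Y t _ Hd Hslope ltac:(lra)) as [s [Hs HYs]].
  pose proof (solution_bounds s ltac:(lra)). lra.
Qed.

Lemma reflected_solves : solves f h1 eps c (fun v => Y (1 - v)).
Proof.
  split; [|split; [|split]].
  - apply (reflect_cont_on01 Y M); auto.
  - rewrite Rminus_0_r. apply solution_at_1.
  - rewrite Rminus_diag. apply Y_0.
  - intros v Hv. split; [apply Rlt_gt, solution_positive; lra|].
    pose proof (solution_bounds (1 - v) ltac:(lra)) as [Hlo Hhi].
    pose proof (barrier_range eps S (1 - (1 - v)) eps_pos S_nonneg ltac:(lra)).
    replace ((c + h1 v) * sqrt (Y (1 - v) * (2 * eps + Y (1 - v))) / (eps + Y (1 - v)) - f v)
      with (- rhs (1 - v) (Y (1 - v))).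
    + apply reflect_derive, (solution_derivative rhs Y M); auto using rhs_unif_cont; lra.
    + unfold rhs, source, coef, gcut. replace (1 - (1 - v)) with v by ring.
      rewrite (clamp_id 0 1 v) by lra.
      rewrite (clamp_id 0 Kmax (Y (1 - v))) by (unfold upper in Hhi; fold Kmax in *; lra).
      unfold gfac, Rdiv. ring.
Qed.

End Solution.

Lemma reversed_problem_solvable : exists y, solves f h1 eps c y.
Proof.
  destruct rhs_bounded as [M [HM HB]].
  destruct (solution_exists rhs M HM HB rhs_unif_cont rhs_noninc) as [Y [HY0 [HYL HYs]]].
  exists (fun v => Y (1 - v)). apply (reflected_solves Y M); auto.
Qed.

End ReversedProblem.

Lemma hypF_nonneg (f : R -> R) : f 0 = 0 -> f 1 = 0 -> (forall s, 0 < s < 1 -> f s > 0) ->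
  forall v, I01 v -> 0 <= f v.
Proof.
  intros Hf0 Hf1 Hpos v [Hv0 Hv1].
  destruct (Req_dec v 0) as [->|]; [lra|].
  destruct (Req_dec v 1) as [->|]; [lra|].
  left. apply Hpos. lra.
Qed.

Lemma slope_sup_nonneg (f : R -> R) (S : R) : f 1 = 0 ->
  is_lub (fun r => exists v, 0 < v <= 1 /\ r = f v / v) S -> 0 <= S.
Proof.
  intros Hf1 [Hub _].
  specialize (Hub (f 1 / 1) ltac:(exists 1; split; [lra|reflexivity])).
  rewrite Hf1 in Hub. unfold Rdiv in Hub. lra.
Qed.

Lemma slope_sup_bound (f : R -> R) (S : R) : f 0 = 0 ->
  is_lub (fun r => exists v, 0 < v <= 1 /\ r = f v / v) S -> forall v, I01 v -> f v <= S * v.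
Proof.
  intros Hf0 [Hub _] v [Hv0 Hv1]. destruct (Req_dec v 0) as [->|Hne]; [lra|].
  specialize (Hub (f v / v) ltac:(exists v; split; [lra|reflexivity])).
  apply Rmult_le_reg_r with (/ v); [apply Rinv_0_lt_compat; lra|].
  replace (S * v * / v) with S by (field; lra). exact Hub.
Qed.

Theorem lemma2 (f h h1 h2 : R -> R) (eps c Mf mh S : R) :
  hypF f -> hypH h h1 h2 -> eps > 0 ->
  (* Mf = max_{v in [0,1]} f v *)
  (exists v, I01 v /\ f v = Mf) -> (forall v, I01 v -> f v <= Mf) ->
  (* mh = min_{v in [0,1]} h'(v) *)
  (exists v, I01 v /\ h1 v = mh) -> (forall v, I01 v -> mh <= h1 v) ->
  (* S = sup_{v in (0,1]} f(v)/v *)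
  is_lub (fun r => exists v, 0 < v <= 1 /\ r = f v / v) S ->
  c >= Mf - mh + 2 * sqrt (eps * S) ->
  exists y : R -> R, solves f h1 eps c y.
Proof.
  intros [Hfc [Hf0 [Hf1 [Hfpos _]]]] [_ [Hh1d _]] He _ HfM _ Hmh Hlub Hc.
  apply (reversed_problem_solvable f h1 eps c Mf mh S He).
  - exact (slope_sup_nonneg f S Hf1 Hlub).
  - exact (cont_on_of_cont_on01 f Hfc).
  - exact (cont_on_of_deriv01 h1 h2 Hh1d).
  - exact (hypF_nonneg f Hf0 Hf1 Hfpos).
  - exact Hfpos.
  - exact HfM.
  - exact (slope_sup_bound f S Hf0 Hlub).
  - exact Hmh.
  - exact Hc.
Qed.
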